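(* Let $\mathcal M=(W,W_\bot,\preccurlyeq,\sqsubseteq,V)$ be a forest-like bi-intuitionistic model of finite height $n$, and let $\Sigma$ be a finite set of formulas with $\#\Sigma=s$. Then $\#(W/{\approx_\Sigma})\le 2^{2(n+1)s}_{n+2}$.
   Context: Formulas: $p\mid\bot\mid\varphi\wedge\psi\mid\varphi\vee\psi\mid\varphi\to\psi\mid\Diamond\varphi\mid\Box\varphi$ over a countably infinite set $\mathbb P$. A bi-intuitionistic model $(W,W_\bot,\preccurlyeq,\sqsubseteq,V)$: $\preccurlyeq,\sqsubseteq$ preorders on $W$, $W_\bot$ upward closed under both, $V:\mathbb P\to2^W$ with $V(p)$ $\preccurlyeq$-upward closed and $\supseteq W_\bot$. Satisfaction: $p$ iff $w\in V(p)$; $\bot$ iff $w\in W_\bot$; $\wedge,\vee$ pointwise; $w\models\varphi\to\psi$ iff for all $v\succcurlyeq w$, $v\models\varphi$ implies $v\models\psi$; $w\models\Diamond\varphi$ iff for all $u\succcurlyeq w$ there is $v\sqsupseteq u$ with $v\models\varphi$; $w\models\Box\varphi$ iff $v\models\varphi$ whenever $w\preccurlyeq u\sqsubseteq v$. $w\prec v$ means $w\preccurlyeq v$ and $v\not\preccurlyeq w$. The height of $w$ is the supremum of $n$ such that there is a chain $w=w_0\prec\cdots\prec w_n$; the height of $\mathcal M$ is the supremum of heights of its worlds. $\mathcal M$ is forest-like if for every $w$ the set $\{v:v\preccurlyeq w\}$ is totally ordered by $\preccurlyeq$. For $R\subseteq W\times W$: forward confluent if $w\preccurlyeq w'$, $wRv$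 imply some $v'$ with $v\preccurlyeq v'$, $w'Rv'$; backward confluent if $wRv\preccurlyeq v'$ implies some $w'$ with $w\preccurlyeq w'Rv'$; downward confluent if $w\preccurlyeq vRv'$ implies some $w'$ with $wRw'\preccurlyeq v'$. The $\Sigma$-label of $w$ is $\ell(w)=(\ell^+(w);\ell^\Diamond(w))$ with $\ell^+(w)=\{\varphi\in\Sigma:(\mathcal M,w)\models\varphi\}$, $\ell^\Diamond(w)=\{\varphi\in\Sigma:\forall v\sqsupseteq w,\ (\mathcal M,v)\not\models\varphi\}$. A $\Sigma$-bisimulation is a forward and backward confluent $Z\subseteq W\times W$ with $wZv\Rightarrow\ell(w)=\ell(v)$. A strong $\Sigma$-bisimulation is a $\Sigma$-bisimulation $Z$ such that both $Z$ and $Z^{-1}$ are downward confluent; $\approx_\Sigma$ is the greatest strong $\Sigma$-bisimulation (the union of all), an equivalence relation. Superexponential: $2^x_0=x$ and $2^x_{y+1}=2^{2^x_y}$. *)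

From Stdlib Require Import List Arith.
Import ListNotations.

Inductive form : Type :=
| Var : nat -> form
| Bot : form
| And : form -> form -> form
| Or : form -> form -> form
| Imp : form -> form -> form
| Dia : form -> form
| Box : form -> form.

Record model : Type := {
  W : Type;
  Wbot : W -> Prop;
  le : W -> W -> Prop;
  sq : W -> W -> Prop;
  V : nat -> W -> Prop;
  le_refl : forall w, le w w;
  le_trans : forall u v w, le u v -> le v w -> le u w;
  sq_refl : forall w, sq w w;
  sq_trans : forall u v w, sq u v -> sq v w -> sq u w;
  Wbot_le : forall w v, Wbot w -> le w v -> Wbot v;
  Wbot_sq : forall w v, Wbot w -> sq w v -> Wbot v;
  V_up : forall p w v, V p w -> le w v -> V p v;
  V_bot : forall p w, Wbot w -> V p w
}.

Arguments Wbot {m}. Arguments le {m}. Arguments sq {m}. Arguments V {m}.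

Fixpoint sat (M : model) (w : W M) (phi : form) : Prop :=
  match phi with
  | Var p => V p w
  | Bot => Wbot w
  | And a b => sat M w a /\ sat M w b
  | Or a b => sat M w a \/ sat M w b
  | Imp a b => forall v, le w v -> sat M v a -> sat M v b
  | Dia a => forall u, le w u -> exists v, sq u v /\ sat M v a
  | Box a => forall u v, le w u -> sq u v -> sat M v a
  end.

Definition lt_w (M : model) (w v : W M) : Prop := le w v /\ ~ le v w.

Definition chain (M : model) (w : W M) (k : nat) (c : nat -> W M) : Prop :=
  c 0 = w /\ forall i, i < k -> lt_w M (c i) (c (S i)).

Definition height_eq (M : model) (n : nat) : Prop :=
  (forall w k c, chain M w k c -> k <= n) /\
  (exists w c, chain M w n c).

Definition forest_like (M : model) : Prop :=
  forall w u v : W M, le u w -> le v w -> le u v \/ le v u.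

Definition label_eq (M : model) (S : list form) (w v : W M) : Prop :=
  forall phi, In phi S ->
    (sat M w phi <-> sat M v phi) /\
    ((forall x, sq w x -> ~ sat M x phi) <-> (forall x, sq v x -> ~ sat M x phi)).

Definition forward_confluent (M : model) (R : W M -> W M -> Prop) : Prop :=
  forall w w' v, le w w' -> R w v -> exists v', le v v' /\ R w' v'.

Definition backward_confluent (M : model) (R : W M -> W M -> Prop) : Prop :=
  forall w v v', R w v -> le v v' -> exists w', le w w' /\ R w' v'.

Definition downward_confluent (M : model) (R : W M -> W M -> Prop) : Prop :=
  forall w v v', le w v -> R v v' -> exists w', R w w' /\ le w' v'.

Definition bisimulation (M : model) (S : list form) (Z : W M -> W M -> Prop) : Prop :=
  forward_confluent M Z /\ backward_confluent M Z /\
  (forall w v, Z w v -> label_eq M S w v).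

Definition strong_bisimulation (M : model) (S : list form) (Z : W M -> W M -> Prop) : Prop :=
  bisimulation M S Z /\ downward_confluent M Z /\
  downward_confluent M (fun w v => Z v w).

Definition approx (M : model) (S : list form) (w v : W M) : Prop :=
  exists Z, strong_bisimulation M S Z /\ Z w v.

Fixpoint sexp (x y : nat) : nat :=
  match y with
  | 0 => x
  | S y' => 2 ^ sexp x y'
  end.

(* #(W / R) <= N : there is a map into {0..N-1} whose fibres lie in single R-classes *)
Definition quotient_card_le (M : model) (R : W M -> W M -> Prop) (N : nat) : Prop :=
  exists f : W M -> nat, (forall w, f w < N) /\ (forall w v, f w = f v -> R w v).

From Stdlib Require Import List Arith Lia Classical ClassicalEpsilon RelationClasses.
Import ListNotations.

(* We build an explicit strong Σ-bisimulation [Zrel] with few classes.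
   Writing x ⋖ z for "z is an immediate strict successor of x", let
   [agree 0] be total and [agree (k+1)] relate x and y when they have the same
   Σ-label, the same diamond labels met in their clusters, and their
   ⋖-successors correspond up to [agree k] (an Egli-Milner lifting).  Then
   [Zrel] is [agree (n+1)] together with the correspondence of the sets of
   strict predecessors up to [agree (n+1)].  Heights, clusters and the
   forest shape make [Zrel] forward, backward and downward confluent.

   Counting: worlds of height at most h fall into at most 2^(level_exp s h)
   classes of [agree (h+1)] (each class is determined by local data and a set
   of classes of successors); predecessor sets are coded height by height, so
   [Zrel] has at most 2^B (2^B + 1)^n classes with B = level_exp s n, which
   is below 2^{2(n+1)s}_{n+2}. *)

Fixpoint tuples {A : Type} (k : nat) (l : list A) : list (list A) :=
  match k with
  | 0 => [[]]
  | S k => flat_map (fun a => map (cons a) (tuples k l)) l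
  end.

Lemma tuples_length {A : Type} (k : nat) (l : list A) :
  length (tuples k l) = length l ^ k.
Proof.
  induction k as [|k IH]; simpl; [reflexivity|].
  rewrite (flat_map_constant_length (c := length l ^ k)); [lia|].
  intros a _; rewrite length_map; exact IH.
Qed.

Lemma in_tuples {A : Type} (k : nat) (l : list A) (t : list A) :
  length t = k -> (forall a, In a t -> In a l) -> In t (tuples k l).
Proof.
  revert t; induction k as [|k IH]; intros [|a t] Ht Hin; simpl in *; try lia; auto.
  apply in_flat_map; exists a; split; auto.
  apply in_map, IH; auto.
Qed.

Lemma map_eq_at {A B : Type} (f g : A -> B) (l : list A) (a : A) :
  map f l = map g l -> In a l -> f a = g a.
Proof.
  induction l as [|b l IH]; simpl; intros Hmap Hin; [contradiction|].
  injection Hmap as Hb Hl; destruct Hin as [<-|Hin]; auto.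
Qed.

(** * Arithmetic of the bound *)

Lemma lt_pow2 (x : nat) : x < 2 ^ x.
Proof. apply Nat.pow_gt_lin_r; lia. Qed.

Lemma double_le_pow2 (s : nat) : 1 <= s -> 2 * s <= 2 ^ s.
Proof.
  induction s as [|s IH]; intros Hs; [lia|].
  destruct s as [|s]; [simpl; lia|].
  rewrite Nat.pow_succ_r'; specialize (IH ltac:(lia)); lia.
Qed.

Lemma sexp_mono_base (j x y : nat) : x <= y -> sexp x j <= sexp y j.
Proof.
  induction j as [|j IH]; simpl; intros Hxy; auto.
  apply Nat.pow_le_mono_r; auto.
Qed.

Lemma sexp_succ_base (j x : nat) : sexp x j + 1 <= sexp (x + 1) j.
Proof.
  induction j as [|j IH]; simpl; [lia|].
  assert (H : 2 ^ (sexp x j + 1) <= 2 ^ sexp (x + 1) j)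
    by (apply Nat.pow_le_mono_r; lia).
  rewrite Nat.pow_add_r in H; pose proof (Nat.pow_nonzero 2 (sexp x j)); simpl in H; lia.
Qed.

(* [2 ^ local_exp s] bounds the number of possible "local" data of a world
   (its positive label, its diamond label and the set of diamond labels of its
   cluster); [2 ^ level_exp s h] bounds the number of classes of worlds of
   height at most [h]. *)
Definition local_exp (s : nat) : nat := s + (s + 2 ^ s).

Fixpoint level_exp (s h : nat) : nat :=
  match h with
  | 0 => local_exp s
  | S h => local_exp s + 2 ^ level_exp s h
  end.

Lemma local_le_level_exp (s h : nat) : local_exp s <= level_exp s h.
Proof. destruct h; simpl; lia. Qed.

Lemma level_exp_succ_bound (s m : nat) : level_exp s (S m) + 1 <= 2 ^ (level_exp s m + 1).
Proof.
  rewrite Nat.pow_add_r; cbn [level_exp].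
  pose proof (lt_pow2 (level_exp s m)); pose proof (local_le_level_exp s m); simpl; lia.
Qed.

Lemma level_exp_le_sexp (s m : nat) : 1 <= s ->
  level_exp s m + m + 2 <= sexp (2 * (m + 2) * s) (m + 1).
Proof.
  intros Hs; induction m as [|m IH].
  - simpl; unfold local_exp.
    replace (2 * 2 * s) with (s + 3 * s) by lia; rewrite Nat.pow_add_r.
    assert (2 ^ 3 <= 2 ^ (3 * s)) by (apply Nat.pow_le_mono_r; lia).
    pose proof (double_le_pow2 s Hs); simpl in *; nia.
  - set (T := sexp (2 * (m + 2) * s) (m + 1)) in *.
    assert (HT : T + 1 <= sexp (2 * (S m + 2) * s) (m + 1)).
    { eapply Nat.le_trans; [apply sexp_succ_base | apply sexp_mono_base; lia]. }
    replace (S m + 1) with (S (m + 1)) by lia; cbn [sexp].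
    assert (H1 : 2 ^ (T + 1) <= 2 ^ sexp (2 * (S m + 2) * s) (m + 1))
      by (apply Nat.pow_le_mono_r; lia).
    assert (H2 : 2 ^ level_exp s m <= 2 ^ T) by (apply Nat.pow_le_mono_r; lia).
    rewrite Nat.pow_add_r, Nat.pow_1_r in H1.
    pose proof (lt_pow2 T); pose proof (local_le_level_exp s m); cbn [level_exp]; lia.
Qed.

(* The exponent of the final count, [B + (B + 1) h] with [B = level_exp s h],
   is below the tower of height [h + 1]. *)
Lemma class_exponent_le_sexp (s h : nat) : 1 <= s ->
  level_exp s h + (level_exp s h + 1) * h <= sexp (2 * (h + 1) * s) (h + 1).
Proof.
  intros Hs; destruct h as [|m].
  - replace (2 * (0 + 1) * s) with (s + s) by lia; cbn; unfold local_exp.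
    rewrite Nat.pow_add_r.
    assert (2 ^ 1 <= 2 ^ s) by (apply Nat.pow_le_mono_r; lia).
    pose proof (double_le_pow2 s Hs); simpl in *; nia.
  - pose proof (level_exp_le_sexp s m Hs) as Htower.
    replace (2 * (m + 2) * s) with (2 * (S m + 1) * s) in Htower by lia.
    set (B := level_exp s (S m)); set (T := sexp (2 * (S m + 1) * s) (m + 1)) in *.
    change (sexp (2 * (S m + 1) * s) (S m + 1)) with (2 ^ T).
    assert (HB : B + 1 <= 2 ^ (level_exp s m + 1)) by apply level_exp_succ_bound.
    assert (Hm : m + 2 <= 2 ^ (m + 1)) by (pose proof (lt_pow2 (m + 1)); lia).
    assert (HT : 2 ^ (level_exp s m + 1 + (m + 1)) <= 2 ^ T)
      by (apply Nat.pow_le_mono_r; lia).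
    rewrite Nat.pow_add_r in HT.
    assert (Hprod : (B + 1) * (m + 2) <= 2 ^ (level_exp s m + 1) * 2 ^ (m + 1))
      by (apply Nat.mul_le_mono; lia).
    nia.
Qed.

Lemma class_count_le_sexp (s h : nat) : 1 <= s ->
  2 ^ level_exp s h * (2 ^ level_exp s h + 1) ^ h <= sexp (2 * (h + 1) * s) (h + 2).
Proof.
  intros Hs; set (B := level_exp s h).
  replace (h + 2) with (S (h + 1)) by lia; cbn [sexp].
  assert (Hsucc : 2 ^ B + 1 <= 2 ^ (B + 1)).
  { rewrite Nat.pow_add_r; pose proof (Nat.pow_nonzero 2 B); simpl; lia. }
  eapply Nat.le_trans; [apply Nat.mul_le_mono_l, Nat.pow_le_mono_l, Hsucc|].
  rewrite <- Nat.pow_mul_r, <- Nat.pow_add_r.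
  apply Nat.pow_le_mono_r; [lia|].
  pose proof (class_exponent_le_sexp s h Hs); lia.
Qed.

(** * Counting equivalence classes *)

Section Counting.
Context {T : Type}.

Definition succ_lift (S E : T -> T -> Prop) (x y : T) : Prop :=
  (forall z, S x z -> exists z', S y z' /\ E z z') /\
  (forall z', S y z' -> exists z, S x z /\ E z z').

Definition agree_on {A : Type} (L : list A) (F : T -> A -> Prop) (x y : T) : Prop :=
  forall a, In a L -> (F x a <-> F y a).

Lemma succ_lift_equiv (S E : T -> T -> Prop) : Equivalence E -> Equivalence (succ_lift S E).
Proof.
  intros [Er Es Et]; split.
  - intros x; split; intros z Hz; exists z; auto.
  - intros x y [Hxy Hyx]; split; intros z Hz.
    + destruct (Hyx z Hz) as [z' [? ?]]; eauto.
    + destruct (Hxy z Hz) as [z' [? ?]]; eauto.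
  - intros x y z [Hxy Hyx] [Hyz Hzy]; split; intros a Ha.
    + destruct (Hxy a Ha) as [b [Hb Hab]]; destruct (Hyz b Hb) as [c [? ?]]; eauto.
    + destruct (Hzy a Ha) as [b [Hb Hab]]; destruct (Hyx b Hb) as [c [? ?]]; eauto.
Qed.

Lemma agree_on_equiv {A : Type} (L : list A) (F : T -> A -> Prop) :
  Equivalence (agree_on L F).
Proof.
  unfold agree_on; split.
  - intros x a _; tauto.
  - intros x y H a Ha; rewrite (H a Ha); tauto.
  - intros x y z H1 H2 a Ha; rewrite (H1 a Ha), (H2 a Ha); tauto.
Qed.

Lemma conj_equiv (R1 R2 : T -> T -> Prop) :
  Equivalence R1 -> Equivalence R2 -> Equivalence (fun x y => R1 x y /\ R2 x y).
Proof.
  intros [r1 s1 t1] [r2 s2 t2]; split.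
  - intros x; auto.
  - intros x y []; auto.
  - intros x y z [] []; eauto.
Qed.

Lemma succ_lift_transfer (S E : T -> T -> Prop) (x y v v' : T) :
  (forall z, S x z <-> S v z) -> (forall z, S y z <-> S v' z) ->
  succ_lift S E v v' -> succ_lift S E x y.
Proof.
  intros Hx Hy [Hvv' Hv'v]; split; intros z Hz.
  - apply Hx in Hz; destruct (Hvv' z Hz) as [z' [? ?]]; exists z'; rewrite Hy; auto.
  - apply Hy in Hz; destruct (Hv'v z Hz) as [z' [? ?]]; exists z'; rewrite Hx; auto.
Qed.

(* The elements satisfying [P] fall into at most [N] classes of [R]: some
   list of at most [N] representatives covers them. *)
Definition few_classes (P : T -> Prop) (R : T -> T -> Prop) (N : nat) : Prop :=
  exists l, length l <= N /\ forall w, P w -> exists r, In r l /\ P r /\ R w r.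

Lemma few_classes_weaken (P : T -> Prop) (R R' : T -> T -> Prop) (N N' : nat) :
  few_classes P R N -> (forall x y, P x -> P y -> R x y -> R' x y) -> N <= N' ->
  few_classes P R' N'.
Proof.
  intros [l [Hl Hcov]] HR HN; exists l; split; [lia|].
  intros w Hw; destruct (Hcov w Hw) as [r [? [? ?]]]; exists r; auto.
Qed.

Lemma few_classes_of_code {A : Type} (P : T -> Prop) (R : T -> T -> Prop)
    (code : T -> A) (L : list A) (N : nat) :
  length L <= N -> (forall w, P w -> In (code w) L) ->
  (forall x y, P x -> P y -> code x = code y -> R x y) -> few_classes P R N.
Proof.
  intros HL Hin HR; destruct (classic (exists w, P w)) as [[w0 Hw0]|Hnone].
  - exists (map (fun a => epsilon (inhabits w0) (fun w => P w /\ code w = a)) L).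
    rewrite length_map; split; auto.
    intros w Hw; eexists; split; [apply in_map, (Hin w Hw)|].
    destruct (epsilon_spec (inhabits w0) (fun w' => P w' /\ code w' = code w)
                (ex_intro _ w (conj Hw eq_refl))) as [HP Hcode].
    split; [exact HP | apply HR; auto].
  - exists []; split; [simpl; lia|]; intros w Hw; exfalso; eauto.
Qed.

Lemma code_of_few_classes (P : T -> Prop) (R : T -> T -> Prop) (N : nat) :
  Equivalence R -> few_classes P R N ->
  exists (code : T -> T) (l : list T), length l <= N /\
    (forall w, P w -> In (code w) l) /\
    (forall x y, P x -> P y -> code x = code y -> R x y).
Proof.
  intros [_ Rs Rt] [l [Hl Hcov]].
  set (code := fun w => epsilon (inhabits w) (fun r => In r l /\ R w r)).
  assert (Hcode : forall w, P w -> In (code w) l /\ R w (code w)).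
  { intros w Hw; apply (epsilon_spec (inhabits w) (fun r => In r l /\ R w r)).
    destruct (Hcov w Hw) as [r [? [_ ?]]]; eauto. }
  exists code, l; split; [exact Hl|split].
  - intros w Hw; apply Hcode, Hw.
  - intros x y Hx Hy He.
    pose proof (proj2 (Hcode x Hx)) as Hxc; pose proof (proj2 (Hcode y Hy)) as Hyc.
    rewrite He in Hxc; eauto.
Qed.

Lemma few_classes_conj (P : T -> Prop) (R1 R2 : T -> T -> Prop) (N1 N2 : nat) :
  Equivalence R1 -> Equivalence R2 -> few_classes P R1 N1 -> few_classes P R2 N2 ->
  few_classes P (fun x y => R1 x y /\ R2 x y) (N1 * N2).
Proof.
  intros E1 E2 C1 C2.
  destruct (code_of_few_classes P R1 N1 E1 C1) as [c1 [l1 [Hl1 [Hin1 Hc1]]]].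
  destruct (code_of_few_classes P R2 N2 E2 C2) as [c2 [l2 [Hl2 [Hin2 Hc2]]]].
  apply (few_classes_of_code P _ (fun w => (c1 w, c2 w)) (list_prod l1 l2)).
  - rewrite length_prod; apply Nat.mul_le_mono; auto.
  - intros w Hw; apply in_prod; auto.
  - intros x y Hx Hy He; injection He as He1 He2; auto.
Qed.

Definition truth (Q : Prop) : bool := if excluded_middle_informative Q then true else false.

Lemma truth_inj (Q Q' : Prop) : truth Q = truth Q' -> (Q <-> Q').
Proof.
  unfold truth; destruct (excluded_middle_informative Q), (excluded_middle_informative Q');
    intuition congruence.
Qed.

(* Agreement on the items of [L] has at most [2 ^ length L] classes: a class
   is determined by the truth values of [F] on [L]. *)
Lemma few_classes_agree_on {A : Type} (P : T -> Prop) (L : list A) (F : T -> A -> Prop) :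
  few_classes P (agree_on L F) (2 ^ length L).
Proof.
  apply (few_classes_of_code P _ (fun w => map (fun a => truth (F w a)) L)
           (tuples (length L) [true; false])).
  - rewrite tuples_length; simpl; lia.
  - intros w _; apply in_tuples; [apply length_map|]; intros [] _; simpl; auto.
  - intros x y _ _ He a Ha; apply truth_inj.
    exact (map_eq_at (fun a => truth (F x a)) (fun a => truth (F y a)) _ _ He Ha).
Qed.

(* If the [S]-successors of [P]-elements fall into at most [N] classes of
   [E], the Egli-Milner lifting has at most [2 ^ N] classes on [P]: a class
   is determined by the set of classes that the successors meet. *)
Lemma few_classes_succ_lift (P Q : T -> Prop) (S E : T -> T -> Prop) (N : nat) :
  Equivalence E -> few_classes Q E N -> (forall x z, P x -> S x z -> Q z) ->
  few_classes P (succ_lift S E) (2 ^ N).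
Proof.
  intros [Er Es Et] [l [Hl Hcov]] HPQ.
  set (meets := fun w r => exists z, S w z /\ E z r).
  apply (few_classes_of_code P _ (fun w => map (fun r => truth (meets w r)) l)
           (tuples (length l) [true; false])).
  - rewrite tuples_length; simpl; apply Nat.pow_le_mono_r; lia.
  - intros w _; apply in_tuples; [apply length_map|]; intros [] _; simpl; auto.
  - intros x y Hx Hy He.
    assert (Hmeets : forall r, In r l -> (meets x r <-> meets y r)).
    { intros r Hr; apply truth_inj.
      exact (map_eq_at (fun r => truth (meets x r)) (fun r => truth (meets y r)) _ _ He Hr). }
    split.
    + intros z Hz; destruct (Hcov z (HPQ _ _ Hx Hz)) as [r [Hr [_ Hzr]]].
      destruct (proj1 (Hmeets r Hr) (ex_intro _ z (conj Hz Hzr))) as [z' [Hz' Hz'r]].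
      exists z'; split; eauto.
    + intros z Hz; destruct (Hcov z (HPQ _ _ Hy Hz)) as [r [Hr [_ Hzr]]].
      destruct (proj2 (Hmeets r Hr) (ex_intro _ z (conj Hz Hzr))) as [z' [Hz' Hz'r]].
      exists z'; split; eauto.
Qed.

End Counting.

(** * The model *)

Section Model.
Context (M : model) (Sg : list form).

Local Notation "x ≼ y" := (@le M x y) (at level 70).
Local Notation "x ≺ y" := (lt_w M x y) (at level 70).

Lemma le_lt_trans (a b c : W M) : a ≼ b -> b ≺ c -> a ≺ c.
Proof.
  intros Hab [Hbc Hcb]; split; [eapply le_trans; eauto|].
  intros Hca; apply Hcb; eapply le_trans; eauto.
Qed.

Lemma lt_le_trans (a b c : W M) : a ≺ b -> b ≼ c -> a ≺ c.
Proof.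
  intros [Hab Hba] Hbc; split; [eapply le_trans; eauto|].
  intros Hca; apply Hba; eapply le_trans; eauto.
Qed.

Lemma lt_trans (a b c : W M) : a ≺ b -> b ≺ c -> a ≺ c.
Proof. intros Hab [Hbc _]; eapply lt_le_trans; eauto. Qed.

Lemma sat_persistent (w v : W M) (phi : form) : sat M w phi -> w ≼ v -> sat M v phi.
Proof.
  revert w v; induction phi; simpl; intros w v Hw Hwv.
  - eapply V_up; eauto.
  - eapply Wbot_le; eauto.
  - destruct Hw; split; eauto.
  - destruct Hw; [left | right]; eauto.
  - intros u Hu; apply Hw; eapply le_trans; eauto.
  - intros u Hu; apply Hw; eapply le_trans; eauto.
  - intros u u' Hu; apply Hw; eapply le_trans; eauto.
Qed.

Definition cluster (x y : W M) : Prop := x ≼ y /\ y ≼ x.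

Definition imm_succ (x z : W M) : Prop := x ≺ z /\ ~ exists y, x ≺ y /\ y ≺ z.

Lemma cluster_sym (x y : W M) : cluster x y -> cluster y x.
Proof. unfold cluster; tauto. Qed.

Lemma cluster_trans (x y z : W M) : cluster x y -> cluster y z -> cluster x z.
Proof. intros [] []; split; eapply le_trans; eauto. Qed.

Lemma cluster_lt_l (x v z : W M) : cluster x v -> (x ≺ z <-> v ≺ z).
Proof. intros [Hxv Hvx]; split; apply le_lt_trans; auto. Qed.

Lemma cluster_lt_r (x v z : W M) : cluster x v -> (z ≺ x <-> z ≺ v).
Proof. intros [Hxv Hvx]; split; intros; eapply lt_le_trans; eauto. Qed.

Lemma cluster_imm_succ (x v z : W M) : cluster x v -> (imm_succ x z <-> imm_succ v z).
Proof.
  intros Hc; unfold imm_succ.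
  pose proof (fun y => cluster_lt_l x v y Hc) as Hlt.
  split; intros [Hz Hno]; split; try (apply Hlt; exact Hz) ;
    intros [y [Hy Hyz]]; apply Hno; exists y; split; auto; apply Hlt; auto.
Qed.

Lemma cluster_cluster (x v z : W M) : cluster x v -> (cluster x z <-> cluster v z).
Proof.
  intros Hc; split; intros Hz; eapply cluster_trans; eauto using cluster_sym.
Qed.

Definition chain_from (x : W M) (k : nat) : Prop := exists c, chain M x k c.

Lemma chain_from_0 (x : W M) : chain_from x 0.
Proof. exists (fun _ => x); split; [reflexivity | intros; lia]. Qed.

Lemma chain_from_cons (x y : W M) (k : nat) : x ≺ y -> chain_from y k -> chain_from x (S k).
Proof.
  intros Hxy [c [Hc0 Hc]].
  exists (fun i => match i with 0 => x | S i => c i end); split; [reflexivity|].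
  intros [|i] Hi; [subst; exact Hxy | apply Hc; lia].
Qed.

Lemma chain_from_uncons (x : W M) (k : nat) :
  chain_from x (S k) -> exists y, x ≺ y /\ chain_from y k.
Proof.
  intros [c [Hc0 Hc]]; exists (c 1); split.
  - subst; apply Hc; lia.
  - exists (fun i => c (S i)); split; [reflexivity | intros; apply Hc; lia].
Qed.

Lemma chain_from_prefix (x : W M) (k j : nat) : chain_from x k -> j <= k -> chain_from x j.
Proof. intros [c [Hc0 Hc]] Hjk; exists c; split; [exact Hc0 | intros; apply Hc; lia]. Qed.

Lemma chain_from_below (a b : W M) (k : nat) : a ≼ b -> chain_from b k -> chain_from a k.
Proof.
  intros Hab Hb; destruct k as [|k]; [apply chain_from_0|].
  destruct (chain_from_uncons _ _ Hb) as [y [Hby Hy]].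
  apply chain_from_cons with y; [eapply le_lt_trans; eauto | exact Hy].
Qed.

Definition height (x : W M) : nat :=
  epsilon (inhabits 0) (fun k => chain_from x k /\ ~ chain_from x (S k)).


(* [phi] is in the diamond label of [x]: no ⊑-successor of [x] satisfies it. *)
Definition dia_refuted (x : W M) (phi : form) : Prop := forall z, sq x z -> ~ sat M z phi.

Definition label_agree : W M -> W M -> Prop := agree_on Sg (sat M).
Definition dia_agree : W M -> W M -> Prop := agree_on Sg dia_refuted.

(* Agreement of the local data: both Σ-labels, and the sets of diamond labels
   met in the two clusters. *)
Definition local_agree (x y : W M) : Prop :=
  label_agree x y /\ dia_agree x y /\ succ_lift cluster dia_agree x y.

Fixpoint agree (k : nat) : W M -> W M -> Prop :=
  match k with
  | 0 => fun _ _ => True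
  | S k => fun x y => local_agree x y /\ succ_lift imm_succ (agree k) x y
  end.

Lemma local_agree_equiv : Equivalence local_agree.
Proof.
  apply conj_equiv; [apply agree_on_equiv|].
  apply conj_equiv; [apply agree_on_equiv | apply succ_lift_equiv, agree_on_equiv].
Qed.

Lemma agree_equiv (k : nat) : Equivalence (agree k).
Proof.
  induction k as [|k IH]; simpl.
  - split; auto.
  - apply conj_equiv; [apply local_agree_equiv | apply succ_lift_equiv, IH].
Qed.

#[local] Existing Instance agree_equiv.

Lemma label_agree_cluster (x v : W M) : cluster x v -> label_agree x v.
Proof. intros [Hxv Hvx] phi _; split; intros; eapply sat_persistent; eauto. Qed.

(* Worlds of a cluster share their strict successors, so agreement transfers
   to cluster-mates that have the same diamond label. *)
Lemma agree_cluster_transfer (k : nat) (x y v v' : W M) :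
  cluster x v -> cluster y v' -> dia_agree x y -> agree (S k) v v' -> agree (S k) x y.
Proof.
  intros Hxv Hyv' Hdia [[Hlab [_ Hcl]] Himm]; split; [split; [|split]|].
  - destruct (agree_on_equiv Sg (sat M)) as [_ Ls Lt].
    eapply Lt; [apply label_agree_cluster, Hxv|].
    eapply Lt; [exact Hlab | apply Ls, label_agree_cluster, Hyv'].
  - exact Hdia.
  - eapply succ_lift_transfer; [| | exact Hcl]; intros z; apply cluster_cluster; auto.
  - eapply succ_lift_transfer; [| | exact Himm]; intros z; apply cluster_imm_succ; auto.
Qed.

Section BoundedHeight.
Variable n : nat.
Hypothesis bounded : forall w k c, chain M w k c -> k <= n.

Lemma height_spec (x : W M) : chain_from x (height x) /\ ~ chain_from x (S (height x)).
Proof.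
  apply (epsilon_spec (inhabits 0) (fun k => chain_from x k /\ ~ chain_from x (S k))).
  apply NNPP; intros Hnone.
  assert (Hall : forall k, chain_from x k).
  { induction k as [|k IH]; [apply chain_from_0|].
    apply NNPP; intros Hk; apply Hnone; eauto. }
  destruct (Hall (S n)) as [c Hc]; specialize (bounded _ _ _ Hc); lia.
Qed.

Lemma chain_from_iff (x : W M) (k : nat) : chain_from x k <-> k <= height x.
Proof.
  destruct (height_spec x) as [Hh Hnot]; split; intros Hk.
  - destruct (le_lt_dec k (height x)) as [|Hlt]; auto.
    exfalso; apply Hnot; eapply chain_from_prefix; eauto.
  - eapply chain_from_prefix; eauto.
Qed.

Lemma height_le_n (x : W M) : height x <= n.
Proof. destruct (proj1 (height_spec x)) as [c Hc]; eapply bounded; eauto. Qed.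

Lemma height_lt (u v : W M) : u ≺ v -> height v < height u.
Proof.
  intros Huv; apply chain_from_iff; eapply chain_from_cons; eauto; apply height_spec.
Qed.

Lemma height_le (u v : W M) : u ≼ v -> height v <= height u.
Proof. intros Huv; apply chain_from_iff; eapply chain_from_below; eauto; apply height_spec. Qed.

Lemma imm_succ_below (w w' : W M) : w ≺ w' -> exists x, imm_succ w x /\ x ≼ w'.
Proof.
  remember (height w - height w') as d eqn:Hd; revert w' Hd.
  induction d as [d IH] using lt_wf_ind; intros w' Hd Hww'.
  destruct (classic (exists y, w ≺ y /\ y ≺ w')) as [[y [Hwy Hyw']]|Hnone].
  - destruct (IH (height w - height y)) with y as [x [Hx Hxy]]; auto.
    + pose proof (height_lt _ _ Hwy); pose proof (height_lt _ _ Hyw'); lia.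
    + exists x; split; [exact Hx | eapply le_trans; [exact Hxy | apply Hyw']].
  - exists w'; split; [split; auto | apply le_refl].
Qed.


Lemma agree_chain (j k : nat) (x y : W M) : k <= j -> agree j x y -> chain_from x k ->
  chain_from y k.
Proof.
  revert j x y; induction k as [|k IH]; intros j x y Hkj Hagree Hx; [apply chain_from_0|].
  destruct j as [|j]; [lia|]; destruct Hagree as [_ [Hsucc _]].
  destruct (chain_from_uncons _ _ Hx) as [t [Hxt Ht]].
  destruct (imm_succ_below x t Hxt) as [z [Hxz Hzt]].
  destruct (Hsucc z Hxz) as [z' [Hyz' Hzz']].
  apply chain_from_cons with z'; [apply Hyz'|].
  apply (IH j z z'); [lia | exact Hzz' | eapply chain_from_below; eauto].
Qed.

Lemma agree_height (x y : W M) : agree (S n) x y -> height y = height x.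
Proof.
  intros Hxy.
  assert (Hyx : agree (S n) y x) by (symmetry; exact Hxy).
  pose proof (height_le_n x); pose proof (height_le_n y).
  assert (height x <= height y).
  { apply chain_from_iff; apply (agree_chain (S n) _ x y); [lia | auto | apply height_spec]. }
  assert (height y <= height x).
  { apply chain_from_iff; apply (agree_chain (S n) _ y x); [lia | auto | apply height_spec]. }
  lia.
Qed.

Lemma agree_stable (k : nat) (x y : W M) : height x < k -> agree k x y -> agree (S k) x y.
Proof.
  revert x y; induction k as [|k IH]; intros x y Hx Hagree; [lia|].
  destruct Hagree as [Hloc [Hxy Hyx]]; split; [exact Hloc|split].
  - intros z Hz; destruct (Hxy z Hz) as [z' [Hz' Hzz']]; exists z'; split; auto.
    apply IH; [pose proof (height_lt _ _ (proj1 Hz)); lia | exact Hzz'].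
  - intros z' Hz'; destruct (Hyx z' Hz') as [z [Hz Hzz']]; exists z; split; auto.
    apply IH; [pose proof (height_lt _ _ (proj1 Hz)); lia | exact Hzz'].
Qed.

(* The relation shown to be a strong Σ-bisimulation: full agreement, plus
   agreement of the sets of strict predecessors. *)
Definition pred_agree : W M -> W M -> Prop := succ_lift (fun x u => u ≺ x) (agree (S n)).

Definition Zrel (x y : W M) : Prop := agree (S n) x y /\ pred_agree x y.

Lemma Zrel_equiv : Equivalence Zrel.
Proof. apply conj_equiv; [apply agree_equiv | apply succ_lift_equiv, agree_equiv]. Qed.

#[local] Existing Instance Zrel_equiv.

Lemma pred_agree_cluster_transfer (x y v v' : W M) :
  cluster x v -> cluster y v' -> pred_agree v v' -> pred_agree x y.
Proof.
  intros Hxv Hyv' Hvv'.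
  eapply succ_lift_transfer; [| | exact Hvv']; intros z; apply cluster_lt_r; auto.
Qed.

(* Moving inside the cluster of [w] is matched inside the cluster of [v],
   by the cluster part of [local_agree]. *)
Lemma Zrel_cluster_step (w w' v : W M) : cluster w w' -> Zrel w v ->
  exists v', cluster v v' /\ Zrel w' v'.
Proof.
  intros Hww' [HE HP].
  pose proof HE as [[_ [_ [Hcl _]]] _].
  destruct (Hcl w' Hww') as [v' [Hvv' Hdia]]; exists v'; split; [exact Hvv'|split].
  - eapply agree_cluster_transfer; eauto using cluster_sym.
  - eapply pred_agree_cluster_transfer; eauto using cluster_sym.
Qed.

Section Forest.
Hypothesis forest : forest_like M.

Lemma imm_succ_pred (w x u : W M) : imm_succ w x -> u ≺ x -> u ≺ w \/ cluster u w.
Proof.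
  intros [Hwx Hno] Hux.
  destruct (forest x u w (proj1 Hux) (proj1 Hwx)) as [Huw|Hwu].
  - destruct (classic (w ≼ u)); [right | left]; split; auto.
  - destruct (classic (u ≼ w)); [right; split; auto|].
    exfalso; apply Hno; exists u; split; [split; auto | exact Hux].
Qed.

Lemma forest_lt_of_height (u v t : W M) : u ≼ t -> v ≼ t -> height v < height u -> u ≺ v.
Proof.
  intros Hut Hvt Hh.
  assert (Hvu : ~ v ≼ u) by (intros Hvu; apply height_le in Hvu; lia).
  destruct (forest t u v Hut Hvt) as [Huv|]; [split; auto | contradiction].
Qed.

Lemma forest_cluster_of_height (u v t : W M) : u ≼ t -> v ≼ t -> height u = height v ->
  cluster u v.
Proof.
  intros Hut Hvt Hh.
  destruct (forest t u v Hut Hvt) as [Huv|Hvu].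
  - destruct (classic (v ≼ u)); [split; auto|].
    assert (Hlt : u ≺ v) by (split; auto); apply height_lt in Hlt; lia.
  - destruct (classic (u ≼ v)); [split; auto|].
    assert (Hlt : v ≺ u) by (split; auto); apply height_lt in Hlt; lia.
Qed.


Lemma pred_match_imm_succ (w x v v1 : W M) : imm_succ w x -> v ≺ v1 -> Zrel w v ->
  forall u, u ≺ x -> exists u', u' ≺ v1 /\ agree (S n) u u'.
Proof.
  intros Hwx Hvv1 [HE [Hpred _]] u Hux.
  destruct (imm_succ_pred w x u Hwx Hux) as [Huw|Huw].
  - destruct (Hpred u Huw) as [u' [Hu'v Huu']].
    exists u'; split; [eapply lt_trans; eauto | exact Huu'].
  - pose proof HE as [[_ [_ [Hcl _]]] _].
    destruct (Hcl u (cluster_sym _ _ Huw)) as [u' [Hvu' Hdia]]; exists u'; split.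
    + apply (cluster_lt_l v u' v1 Hvu'); exact Hvv1.
    + exact (agree_cluster_transfer n u u' w v Huw (cluster_sym _ _ Hvu') Hdia HE).
Qed.

(* Climbing to an immediate successor is matched by [Zrel]; the extra round
   of agreement comes from [agree_stable]. *)
Lemma Zrel_imm_step (w x v : W M) : imm_succ w x -> Zrel w v ->
  exists v1, imm_succ v v1 /\ Zrel x v1.
Proof.
  intros Hwx HZ; pose proof HZ as [[_ [Hsucc _]] _].
  destruct (Hsucc x Hwx) as [v1 [Hvv1 Hxv1]]; exists v1; split; [exact Hvv1|split].
  - apply agree_stable; [|exact Hxv1].
    pose proof (height_lt _ _ (proj1 Hwx)); pose proof (height_le_n w); lia.
  - split.
    + exact (pred_match_imm_succ w x v v1 Hwx (proj1 Hvv1) HZ).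
    + intros u' Hu'.
      assert (HZ' : Zrel v w) by (symmetry; exact HZ).
      destruct (pred_match_imm_succ v v1 w x Hvv1 (proj1 Hwx) HZ' u' Hu') as [u [Hu Hu'u]].
      exists u; split; [exact Hu | symmetry; exact Hu'u].
Qed.

(* Forward confluence, by induction on the height, climbing from [w] to [w']
   through an immediate successor. *)
Lemma Zrel_forward (w w' v : W M) : w ≼ w' -> Zrel w v -> exists v', v ≼ v' /\ Zrel w' v'.
Proof.
  remember (height w) as h eqn:Hh; revert w w' v Hh.
  induction h as [h IH] using lt_wf_ind; intros w w' v Hh Hww' HZ.
  destruct (classic (w' ≼ w)) as [Hw'w|Hw'w].
  - destruct (Zrel_cluster_step w w' v) as [v' [[Hvv' _] HZ']]; [split; auto | exact HZ|].
    exists v'; auto.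
  - destruct (imm_succ_below w w') as [x [Hwx Hxw']]; [split; auto|].
    destruct (Zrel_imm_step _ _ _ Hwx HZ) as [v1 [Hvv1 HZ1]].
    destruct (IH (height x)) with x w' v1 as [v' [Hv1v' HZ']]; auto.
    + pose proof (height_lt _ _ (proj1 Hwx)); lia.
    + exists v'; split; [eapply le_trans; [apply Hvv1 | exact Hv1v'] | exact HZ'].
Qed.

(* Downward confluence: a strict predecessor of [v] is matched by a strict
   predecessor of [v'] of the same height, and in a forest the predecessors of
   a world are ordered by height. *)
Lemma Zrel_downward (w v v' : W M) : w ≼ v -> Zrel v v' -> exists w', Zrel w w' /\ w' ≼ v'.
Proof.
  intros Hwv HZ; destruct (classic (v ≼ w)) as [Hvw|Hvw].
  - destruct (Zrel_cluster_step v w v') as [w' [[_ Hw'v'] HZ']]; [split; auto | exact HZ|].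
    exists w'; auto.
  - assert (Hwv' : w ≺ v) by (split; auto).
    destruct HZ as [_ [Hpred Hpred']].
    destruct (Hpred w Hwv') as [w' [Hw'v' Hww']].
    pose proof (agree_height _ _ Hww') as Hh.
    exists w'; split; [split; [exact Hww'|split] | apply Hw'v'].
    + intros u Hu; destruct (Hpred u (lt_trans _ _ _ Hu Hwv')) as [u' [Hu'v' Huu']].
      exists u'; split; [|exact Huu'].
      pose proof (agree_height _ _ Huu'); pose proof (height_lt _ _ Hu).
      apply (forest_lt_of_height u' w' v'); [apply Hu'v' | apply Hw'v' | lia].
    + intros u' Hu'; destruct (Hpred' u' (lt_trans _ _ _ Hu' Hw'v')) as [u [Huv Huu']].
      exists u; split; [|exact Huu'].
      pose proof (agree_height _ _ Huu'); pose proof (height_lt _ _ Hu').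
      apply (forest_lt_of_height u w v); [apply Huv | exact Hwv | lia].
Qed.

(* Symmetry of [Zrel] turns forward into backward confluence and downward
   confluence of [Zrel] into that of its converse. *)
Lemma Zrel_strong : strong_bisimulation M Sg Zrel.
Proof.
  split; [split; [|split] | split].
  - intros w w' v Hww' HZ; exact (Zrel_forward w w' v Hww' HZ).
  - intros w v v' HZ Hvv'.
    assert (HZ' : Zrel v w) by (symmetry; exact HZ).
    destruct (Zrel_forward v v' w Hvv' HZ') as [w' [Hww' HZ'']].
    exists w'; split; [exact Hww' | symmetry; exact HZ''].
  - intros w v [[[Hlab [Hdia _]] _] _] phi Hphi; split; [apply Hlab | apply Hdia]; exact Hphi.
  - intros w v v' Hwv HZ; exact (Zrel_downward w v v' Hwv HZ).
  - intros w v v' Hwv HZ.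
    assert (HZ' : Zrel v v') by (symmetry; exact HZ).
    destruct (Zrel_downward w v v' Hwv HZ') as [w' [HZw Hw'v']].
    exists w'; split; [symmetry; exact HZw | exact Hw'v'].
Qed.

(* Local data: [2^s] labels, [2^s] diamond labels, [2^(2^s)] sets of them. *)
Lemma few_local_classes (P : W M -> Prop) :
  few_classes P local_agree (2 ^ local_exp (length Sg)).
Proof.
  pose proof (few_classes_agree_on P Sg (sat M)) as Hlab.
  pose proof (few_classes_agree_on P Sg dia_refuted) as Hdia.
  pose proof (few_classes_succ_lift P (fun _ => True) cluster dia_agree _
                (agree_on_equiv Sg dia_refuted) (few_classes_agree_on _ Sg dia_refuted)
                (fun _ _ _ _ => I)) as Hcl.
  pose proof (few_classes_conj _ _ _ _ _ (agree_on_equiv Sg dia_refuted)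
                (succ_lift_equiv cluster _ (agree_on_equiv Sg dia_refuted)) Hdia Hcl) as Hdiacl.
  pose proof (few_classes_conj _ _ _ _ _ (agree_on_equiv Sg (sat M))
                (conj_equiv _ _ (agree_on_equiv Sg dia_refuted)
                   (succ_lift_equiv cluster _ (agree_on_equiv Sg dia_refuted)))
                Hlab Hdiacl) as Hloc.
  eapply few_classes_weaken; [exact Hloc | intros x y _ _ H; exact H|].
  unfold local_exp; rewrite !Nat.pow_add_r; lia.
Qed.

Lemma few_level_classes (h : nat) :
  few_classes (fun w => height w <= h) (agree (S h)) (2 ^ level_exp (length Sg) h).
Proof.
  induction h as [|h IH].
  - eapply few_classes_weaken; [apply few_local_classes| |reflexivity].
    intros x y Hx Hy Hloc; split; [exact Hloc|].
    split; intros z [Hz _]; apply height_lt in Hz; lia.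
  - pose proof (few_classes_succ_lift (fun w => height w <= S h) (fun w => height w <= h)
                  imm_succ (agree (S h)) _ (agree_equiv (S h)) IH) as Hsucc.
    assert (Hsucc' : few_classes (fun w => height w <= S h) (succ_lift imm_succ (agree (S h)))
                       (2 ^ 2 ^ level_exp (length Sg) h)).
    { apply Hsucc; intros x z Hx [Hz _]; apply height_lt in Hz; lia. }
    eapply few_classes_weaken;
      [apply (few_classes_conj _ _ _ _ _ local_agree_equiv (succ_lift_equiv _ _ (agree_equiv _))
                (few_local_classes _) Hsucc') | intros x y _ _ H; exact H |].
    cbn [level_exp]; rewrite Nat.pow_add_r; lia.
Qed.

Lemma few_top_classes : few_classes (fun _ => True) (agree (S n)) (2 ^ level_exp (length Sg) n).
Proof.
  destruct (few_level_classes n) as [l [Hl Hcov]]; exists l; split; [exact Hl|].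
  intros w _; destruct (Hcov w (height_le_n w)) as [r [Hr [_ Hwr]]]; exists r; auto.
Qed.

(* The strict predecessors of [w] are coded by listing, for each height
   [h = 1 .. n], the code of some predecessor of height [h], if any.  In a
   forest the predecessors of equal height form a cluster, so the list
   determines them up to [agree (S n)]. *)
Definition pred_code (code : W M -> W M) (w : W M) : list (option (W M)) :=
  map (fun h => if excluded_middle_informative (exists u, u ≺ w /\ height u = h)
                then Some (code (epsilon (inhabits w) (fun u => u ≺ w /\ height u = h)))
                else None)
      (seq 1 n).

Lemma pred_code_match (code : W M -> W M) (x y : W M) :
  (forall a b, code a = code b -> agree (S n) a b) ->
  pred_code code x = pred_code code y ->
  forall u, u ≺ x -> exists u', u' ≺ y /\ agree (S n) u u'.
Proof.
  intros Hcode He u Hux.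
  assert (Hh : In (height u) (seq 1 n)).
  { apply in_seq; pose proof (height_le_n u); pose proof (height_lt _ _ Hux); lia. }
  pose proof (map_eq_at _ _ _ _ He Hh) as Hf; cbn beta in Hf; revert Hf.
  destruct (excluded_middle_informative (exists u0, u0 ≺ x /\ height u0 = height u))
    as [Hx|Hx]; [|exfalso; eauto].
  destruct (excluded_middle_informative (exists u0, u0 ≺ y /\ height u0 = height u))
    as [Hy|Hy]; [|discriminate].
  intros Hf; injection Hf as Hf.
  destruct (epsilon_spec (inhabits x) _ Hx) as [Hux' Hhx].
  destruct (epsilon_spec (inhabits y) _ Hy) as [Huy' Hhy].
  set (ux := epsilon (inhabits x) _) in *; set (uy := epsilon (inhabits y) _) in *.
  assert (Hcl : cluster u ux)
    by (apply (forest_cluster_of_height u ux x); [apply Hux | apply Hux' | congruence]).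
  assert (HE : agree (S n) ux uy) by (apply Hcode; exact Hf).
  pose proof HE as [[_ [_ [Hcls _]]] _].
  destruct (Hcls u (cluster_sym _ _ Hcl)) as [u' [Huyu' Hdia]]; exists u'; split.
  - apply (cluster_lt_l uy u' y Huyu'); exact Huy'.
  - exact (agree_cluster_transfer n u u' ux uy Hcl (cluster_sym _ _ Huyu') Hdia HE).
Qed.

Lemma few_pred_classes :
  few_classes (fun _ => True) pred_agree ((2 ^ level_exp (length Sg) n + 1) ^ n).
Proof.
  destruct (code_of_few_classes _ _ _ (agree_equiv (S n)) few_top_classes)
    as [code [l [Hl [Hin Hcode]]]].
  assert (Hcode' : forall a b, code a = code b -> agree (S n) a b) by auto.
  apply (few_classes_of_code _ _ (pred_code code) (tuples n (None :: map Some l))).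
  - rewrite tuples_length; simpl; rewrite length_map; apply Nat.pow_le_mono_l; lia.
  - intros w _; apply in_tuples; [unfold pred_code; rewrite length_map, length_seq; reflexivity|].
    intros a Ha; unfold pred_code in Ha; apply in_map_iff in Ha; destruct Ha as [h [<- _]].
    destruct (excluded_middle_informative _); [right; apply in_map, Hin; exact I | left; reflexivity].
  - intros x y _ _ He; split; [exact (pred_code_match code x y Hcode' He)|].
    intros u' Hu'; destruct (pred_code_match code y x Hcode' (eq_sym He) u' Hu') as [u [Hu Hu'u]].
    exists u; split; [exact Hu | symmetry; exact Hu'u].
Qed.

Lemma few_Zrel_classes : few_classes (fun _ => True) Zrel
  (2 ^ level_exp (length Sg) n * (2 ^ level_exp (length Sg) n + 1) ^ n).
Proof.
  exact (few_classes_conj _ _ _ _ _ (agree_equiv _) (succ_lift_equiv _ _ (agree_equiv _))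
           few_top_classes few_pred_classes).
Qed.

End Forest.
End BoundedHeight.
End Model.

Lemma quotient_card_of_few_classes (M : model) (E R : W M -> W M -> Prop) (N : nat) :
  Equivalence E -> few_classes (fun _ => True) E N -> (forall x y, E x y -> R x y) ->
  quotient_card_le M R N.
Proof.
  intros [_ Es Et] [l [Hl Hcov]] HER.
  assert (Hidx : forall w, exists i, i < length l /\ E w (nth i l w)).
  { intros w; destruct (Hcov w I) as [r [Hr [_ Hwr]]].
    destruct (In_nth l r w Hr) as [i [Hi Hri]]; exists i; split; [exact Hi | congruence]. }
  exists (fun w => proj1_sig (constructive_indefinite_description _ (Hidx w))); split.
  - intros w; destruct (constructive_indefinite_description _ (Hidx w)) as [i [Hi Hwi]]; simpl; lia.
  - intros w v.
    destruct (constructive_indefinite_description _ (Hidx w)) as [i [Hi Hw]].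
    destruct (constructive_indefinite_description _ (Hidx v)) as [j [Hj Hv]].
    simpl; intros <-; rewrite (nth_indep l w v Hi) in Hw; eauto.
Qed.

Lemma approx_nil (M : model) (w v : W M) : approx M [] w v.
Proof.
  exists (fun _ _ => True); split; [|exact I].
  split; [split; [|split] | split].
  - intros a b c _ _; exists c; split; [apply le_refl | exact I].
  - intros a b c _ _; exists a; split; [apply le_refl | exact I].
  - intros a b _ phi [].
  - intros a b c _ _; exists c; split; [exact I | apply le_refl].
  - intros a b c _ _; exists c; split; [exact I | apply le_refl].
Qed.

(* Σ = ∅ is trivial; otherwise [Zrel] is a strong Σ-bisimulation, hence
   contained in ≈_Σ, with at most 2^{2(n+1)s}_{n+2} classes. *)
Theorem mainTheorem13 (M : model) (n : nat) (Sigma : list form) (s : nat) :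
  forest_like M -> height_eq M n -> NoDup Sigma -> length Sigma = s ->
  quotient_card_le M (approx M Sigma) (sexp (2 * (n + 1) * s) (n + 2)).
Proof.
  intros Hforest [Hbounded _] _ <-.
  destruct Sigma as [|phi Sigma].
  - exists (fun _ => 0); split; [|intros w v _; apply approx_nil].
    intros _; replace (n + 2) with (S (n + 1)) by lia; cbn [sexp].
    apply Nat.neq_0_lt_0, Nat.pow_nonzero; lia.
  - apply (quotient_card_of_few_classes M (Zrel M (phi :: Sigma) n)).
    + apply Zrel_equiv.
    + eapply few_classes_weaken;
        [apply (few_Zrel_classes M (phi :: Sigma) n Hbounded Hforest)
        | intros x y _ _ H; exact H
        | apply class_count_le_sexp; simpl; lia].
    + intros w v HZ; exists (Zrel M (phi :: Sigma) n); split; [|exact HZ].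
      exact (Zrel_strong M (phi :: Sigma) n Hbounded Hforest).
Qed.
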